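(* Let $k, m, s$ be positive integers with $m \geq 2$, $s \leq k-2$ and $m 2^{-s} \leq 1/4$, let $n = km$, and let $\mathcal{F} \subset \mathcal{P}([n])$ be constructed as follows: partition $[n]$ into blocks $B_1,\ldots,B_m$ with $|B_i| = k$, choose $T_i \subset B_i$ with $|T_i| = s$, put $T = \bigcup_i T_i$, and let $\mathcal{F}$ be the union-closed family generated by $\{B_i \cup \{t\} : i \in [m],\ t \in T\}$. Then: (i) for every $x \in [n]\setminus T$, $\frac{1}{m} \leq \gamma_x \leq \frac{2}{m}$; (ii) for every $x \in T$, $\frac12 \leq \gamma_x \leq 1$; (iii) $\displaystyle \frac{1}{m} \leq \mathrm{AOD}(\mathcal{F}) \leq \frac{2}{m} + \frac{m^2 s}{n}$.
   Context: $[n] = \{1,\ldots,n\}$. A family of sets is union-closed if it contains the union of any two of its members; the union-closed family generated by $\mathcal{G}$ is the smallest union-closed family containing $\mathcal{G}$. For a finite nonempty family $\mathcal{F} \subset \mathcal{P}(X)$ and $x \in X$, the abundance is $\gamma_x = |\{A \in \mathcal{F} : x \in A\}|/|\mathcal{F}|$. For $\mathcal{F} \neq \emptyset,\{\emptyset\}$, the average overlap density is $\mathrm{AOD}(\mathcal{F}) = \frac{1}{|\mathcal{F}\setminus\{\emptyset\}|}\sum_{A \in \mathcal{F}\setminus\{\emptyset\}} \frac{1}{|A|}\sum_{x \in A}\gamma_x$. *)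

From mathcomp Require Import all_boot all_order all_algebra.
Set Implicit Arguments. Unset Strict Implicit. Unset Printing Implicit Defensive.
Import Order.TTheory GRing.Theory Num.Theory.
Local Open Scope ring_scope.

Section Defs.
Variable T : finType.

Definition union_closed (F : {set {set T}}) : bool :=
  [forall A in F, forall B in F, (A :|: B) \in F].

Definition uc_gen (G : {set {set T}}) : {set {set T}} :=
  \bigcap_(H : {set {set T}} | union_closed H && (G \subset H)) H.

Definition abundance (F : {set {set T}}) (x : T) : rat :=
  #|[set A in F | x \in A]|%:R / #|F|%:R.

Definition AOD (F : {set {set T}}) : rat :=
  (#|F :\ set0|%:R)^-1 *
  \sum_(A in F :\ set0) ((#|A|%:R)^-1 * \sum_(x in A) abundance F x).
End Defs.

From mathcomp Require Import all_boot all_order all_algebra.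
From mathcomp Require Import zify.
Import Order.TTheory GRing.Theory Num.Theory.
Local Open Scope ring_scope.
Set Implicit Arguments. Unset Strict Implicit. Unset Printing Implicit Defensive.

(* The family F generated by the sets B i ∪ {t} (t ∈ T) has an explicit
   description: A ∈ F iff every trace A ∩ B i is either the whole block B i or
   a subset of T i, and at least one block is contained in A (Fam_char).  Such
   sets are determined by independent choices on the blocks, so with a = 2^s:
     |F| = (a+1)^m - a^m,  and  |{A ∈ F | x ∈ A}| = (a+1)^(m-1) for x ∉ T.
   Two binomial estimates for (a+1)^m - a^m (valid when m ≤ a) turn this into
   1/m ≤ γ_x ≤ 2/m, which is part (i).  For x ∈ T, adding x maps F into F
   injectively on the sets missing x, so γ_x ≥ 1/2: part (ii).  Part (iii)
   follows from two general bounds on AOD: it is at least any lower bound on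
   the abundances, and at most hi + |S|/k when abundances are at most hi off S
   and all nonempty members have at least k points; here S = T, |T| ≤ ms. *)

Section UnionClosed.
Variable T : finType.
Implicit Types (G H S : {set {set T}}) (A X Y : {set T}).

Lemma union_closedP H :
  reflect (forall X Y, X \in H -> Y \in H -> X :|: Y \in H) (union_closed H).
Proof.
apply: (iffP forallP) => [hH X Y hX hY | hH X].
  by have /implyP/(_ hX)/forallP/(_ Y)/implyP/(_ hY) := hH X.
by apply/implyP => hX; apply/forallP => Y; apply/implyP; apply: hH.
Qed.

Lemma union_closed_bigcup H S :
  union_closed H -> S \subset H -> S != set0 -> \bigcup_(X in S) X \in H.
Proof.
move=> /union_closedP hH sSH /set0Pn [X0 hX0].
have : (\bigcup_(X in S) X \in H) || (\bigcup_(X in S) X == set0).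
  apply: (big_ind (fun U => (U \in H) || (U == set0))) => [|U V|X hX].
  - by rewrite eqxx orbT.
  - move=> /orP [hU | /eqP ->] /orP [hV | /eqP ->];
      by rewrite ?setU0 ?set0U ?hU ?hV ?hH ?eqxx ?orbT.
  - by rewrite (subsetP sSH).
case/orP => [// | /eqP U0].
have /eqP X00 : X0 == set0 by rewrite -subset0 -U0 (bigcup_max X0 hX0).
by rewrite U0 -X00 (subsetP sSH).
Qed.

Lemma sub_uc_gen G : G \subset uc_gen G.
Proof. by apply/subsetP => X hX; apply/bigcapP => H /andP [_ /subsetP]; apply. Qed.

Lemma uc_gen_union_closed G : union_closed (uc_gen G).
Proof.
apply/union_closedP => X Y /bigcapP hX /bigcapP hY; apply/bigcapP => H hGH.
by case/andP: (hGH) => /union_closedP hH _; apply: hH; [apply: hX | apply: hY].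
Qed.

Lemma uc_gen_min G H : union_closed H -> G \subset H -> uc_gen G \subset H.
Proof. by move=> hH hGH; apply: bigcap_inf; rewrite hH hGH. Qed.

(* A nonempty set lies in uc_gen G as soon as each of its points is covered
   by a generator contained in it: it is then the union of these generators. *)
Lemma mem_uc_gen G A : A != set0 ->
  (forall x, x \in A -> exists2 X, X \in G & (x \in X) && (X \subset A)) ->
  A \in uc_gen G.
Proof.
move=> /set0Pn [x0 hx0] cover; set S := [set X in G | X \subset A].
have -> : A = \bigcup_(X in S) X.
  apply/eqP; rewrite eqEsubset; apply/andP; split.
    apply/subsetP => x /cover [X hX /andP [hxX sXA]].
    by apply/bigcupP; exists X; rewrite // inE hX.
  by apply/bigcupsP => X; rewrite inE => /andP [].
apply: union_closed_bigcup; first exact: uc_gen_union_closed.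
  by apply/subsetP => X; rewrite inE => /andP [hX _]; apply: (subsetP (sub_uc_gen G)).
have [X0 hX0 /andP [_ sX0A]] := cover x0 hx0.
by apply/set0Pn; exists X0; rewrite inE hX0.
Qed.

End UnionClosed.

Section Blocks.
Variables (T I : finType) (B : I -> {set T}).
Hypothesis B_disj : forall i j, i != j -> [disjoint B i & B j].
Hypothesis B_cover : \bigcup_i B i = [set: T].

Lemma block_of x : exists i, x \in B i.
Proof.
have /bigcupP [i _ hx] : x \in \bigcup_i B i by rewrite B_cover.
by exists i.
Qed.

Lemma block_unique x i j : x \in B i -> x \in B j -> i = j.
Proof.
move=> hi hj; apply/eqP; apply: contraTT isT => /B_disj /disjoint_setI0 /setP/(_ x).
by rewrite !inE hi hj.
Qed.

Definition blockwise (O : I -> {set {set T}}) : {set {set T}} :=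
  [set A : {set T} | [forall i, A :&: B i \in O i]].

Lemma bigcup_traces (A : {set T}) : \bigcup_i (A :&: B i) = A.
Proof.
apply/setP => x; apply/bigcupP/idP => [[i _] | hx]; first by rewrite inE => /andP [].
by have [i hi] := block_of x; exists i; rewrite ?inE ?hx.
Qed.

Lemma trace_bigcup (f : I -> {set T}) j :
  (forall i, f i \subset B i) -> (\bigcup_i f i) :&: B j = f j.
Proof.
move=> fB; apply/setP => x; rewrite inE.
apply/andP/idP => [[/bigcupP [i _ hx] hxj] | hx].
  by rewrite -(block_unique (subsetP (fB i) x hx) hxj).
by split; [apply/bigcupP; exists j | apply: (subsetP (fB j))].
Qed.

(* Blockwise choices are independent, so they multiply. *)
Lemma card_blockwise (O : I -> {set {set T}}) :
  (forall i, O i \subset powerset (B i)) -> #|blockwise O| = (\prod_i #|O i|)%N.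
Proof.
move=> OB; have fB (f : {dffun forall i : I, {set T}}) :
    f \in setXn O -> forall i, f i \subset B i.
  by move=> /setXnP hf i; have := subsetP (OB i) _ (hf i); rewrite powersetE.
have -> : blockwise O =
    [set \bigcup_i f i | f : {dffun forall i : I, {set T}} in setXn O].
  apply/setP => A; rewrite inE; apply/forallP/imsetP => [hA | [f hf ->] i].
    exists [ffun i => A :&: B i]; first by apply/setXnP => i; rewrite ffunE.
    by rewrite -[LHS]bigcup_traces; apply: eq_bigr => i _; rewrite ffunE.
  by rewrite trace_bigcup; [apply/setXnP | apply: fB].
rewrite card_in_imset ?cardsXn // => f g hf hg eq_fg; apply/ffunP => i.
by rewrite -(trace_bigcup i (fB f hf)) eq_fg trace_bigcup //; apply: fB.
Qed.

End Blocks.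

Lemma card_bigcup_le (T I : finType) (F : I -> {set T}) :
  (#|\bigcup_i F i| <= \sum_i #|F i|)%N.
Proof.
apply: (big_ind2 (fun (U : {set T}) (c : nat) => #|U| <= c)%N) => //.
  by rewrite cards0.
by move=> U1 c1 U2 c2 h1 h2; apply: leq_trans (leq_card_setU U1 U2) _; apply: leq_add.
Qed.

Lemma pow_succ_sub_le (a q : nat) : (a.+1 ^ q.+1 <= q.+1 * a.+1 ^ q + a ^ q.+1)%N.
Proof.
elim: q => [|q IH]; first by rewrite !expn1 expn0; lia.
have le_pow : (a ^ q.+1 <= a.+1 ^ q.+1)%N by rewrite leq_exp2r.
have step := leq_mul (leqnn a.+1) IH.
have := expnS a.+1 q.+1; have := expnS a.+1 q; have := expnS a q.+1.
nia.
Qed.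

Lemma bernoulli_nat (a q : nat) : (a ^ q * (a + q.+1) <= a.+1 ^ q.+1)%N.
Proof.
elim: q => [|q IH]; first by rewrite expn0 expn1; lia.
move: IH; rewrite !(expnS _ q.+1) (expnS a q).
set u := (a.+1 ^ q.+1)%N; set v := (a ^ q)%N.
nia.
Qed.

(* Lower estimate (a+1)^(q+1) - a^(q+1) >= (q+1) (a+1)^q / 2 when q <= a+1;
   it follows from Bernoulli's inequality after multiplying by a+q+1. *)
Lemma pow_succ_sub_ge (a q : nat) : (q <= a.+1)%N ->
  (q.+1 * a.+1 ^ q + 2 * a ^ q.+1 <= 2 * a.+1 ^ q.+1)%N.
Proof.
move=> hq; have bern := bernoulli_nat a q.
rewrite -(@leq_pmul2r (a + q.+1)) ?addnS //.
move: bern; rewrite !expnS; set u := (a.+1 ^ q)%N; set v := (a ^ q)%N => bern.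
have coef : (q.+1 * (a + q.+1) + 2 * a * a.+1 <= 2 * a.+1 * (a + q.+1))%N by nia.
have := leq_mul coef (leqnn u); have := leq_mul (leqnn (2 * a)) bern.
nia.
Qed.

Lemma ler_ratio (p q r u : nat) : (0 < q)%N -> (0 < u)%N ->
  (p%:R / q%:R <= r%:R / u%:R :> rat) = (p * u <= r * q)%N.
Proof.
move=> q_gt0 u_gt0; rewrite ler_pdivrMr ?ltr0n // mulrAC ler_pdivlMr ?ltr0n //.
by rewrite -!natrM ler_nat.
Qed.

Section Means.
Variable X : finType.
Implicit Types (S : {set X}) (f : X -> rat).

Lemma mean_ge S f lo : S != set0 -> (forall A, A \in S -> lo <= f A) ->
  lo <= (#|S|%:R)^-1 * \sum_(A in S) f A.
Proof.
move=> S0 hf; rewrite ler_pdivlMl ?ltr0n ?card_gt0 // mulr_natl -sumr_const.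
exact: ler_sum.
Qed.

Lemma mean_le S f hi : S != set0 -> (forall A, A \in S -> f A <= hi) ->
  (#|S|%:R)^-1 * \sum_(A in S) f A <= hi.
Proof.
move=> S0 hf; rewrite ler_pdivrMl ?ltr0n ?card_gt0 // mulr_natl -sumr_const.
exact: ler_sum.
Qed.

End Means.

Section Abundance.
Variable T : finType.
Implicit Types (F : {set {set T}}) (S : {set T}).

Lemma abundance_le1 F x : abundance F x <= 1.
Proof.
rewrite /abundance; have [F0 | F_gt0] := posnP #|F|.
  by rewrite F0 invr0 mulr0.
rewrite ler_pdivrMr ?ltr0n // mul1r ler_nat subset_leq_card //.
by apply/subsetP => A; rewrite inE => /andP [].
Qed.

Lemma abundance_ge_half F x : F != set0 ->
  (forall A, A \in F -> x |: A \in F) -> 1 / 2 <= abundance F x.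
Proof.
move=> F0 addx; set P := [set A in F | x \in A].
have cardF : (#|P| + #|F :\: P| = #|F|)%N.
  rewrite -(cardsID P F) (setIidPr _) //.
  by apply/subsetP => A; rewrite inE => /andP [].
have le_missing : (#|F :\: P| <= #|P|)%N.
  rewrite -(@card_in_imset _ _ (fun A => x |: A)) ?subset_leq_card //.
    apply/subsetP => _ /imsetP [A /setDP [hA _] ->].
    by rewrite inE addx // setU11.
  move=> A1 A2; rewrite !inE => /andP [h1 F1] /andP [h2 F2] e.
  rewrite F1 /= in h1; rewrite F2 /= in h2.
  by rewrite -(setU1K h1) e setU1K.
rewrite /abundance -/P -[1 / 2]/(1%:R / 2%:R : rat) ler_ratio ?card_gt0 //; lia.
Qed.

(* AOD is a mean of means of abundances. *)
Lemma AOD_ge F lo : F :\ set0 != set0 -> (forall x, lo <= abundance F x) ->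
  lo <= AOD F.
Proof.
move=> F0 hlo; apply: mean_ge => // A; rewrite in_setD1 => /andP [A0 _].
by apply: mean_ge.
Qed.

(* Abundances are at most 1 on S and at most hi elsewhere; since every
   nonempty member has at least k points, S raises AOD by at most |S|/k. *)
Lemma AOD_le F S hi k : F :\ set0 != set0 -> (0 < k)%N -> 0 <= hi ->
  (forall x, x \notin S -> abundance F x <= hi) ->
  (forall A, A \in F -> A != set0 -> (k <= #|A|)%N) ->
  AOD F <= hi + #|S|%:R / k%:R.
Proof.
move=> F0 k_gt0 hi_ge0 hhi large; apply: mean_le => // A.
rewrite in_setD1 => /andP [A0 AF]; have kA := large A AF A0.
have A_gt0 : (0 < #|A|%:R :> rat) by rewrite ltr0n; lia.
rewrite (big_setID S) /= ler_pdivrMl // mulrDr [X in _ <= X]addrC.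
apply: lerD.
  apply: le_trans (ler_sum _ (fun x _ => abundance_le1 F x)) _.
  rewrite sumr_const mulrA ler_pdivlMr ?ltr0n // -!natrM ler_nat mulnC.
  by rewrite leq_mul ?subset_leq_card ?subsetIr.
have : \sum_(x in A :\: S) abundance F x <= \sum_(x in A :\: S) hi.
  by apply: ler_sum => x; rewrite inE => /andP [/hhi].
move/le_trans; apply; rewrite sumr_const -[hi *+ _]mulr_natl.
by apply: ler_wpM2r => //; rewrite ler_nat subset_leq_card ?subsetDl.
Qed.

End Abundance.

Section Construction.
Variables (n m k s : nat) (B Ts : 'I_m -> {set 'I_n}).
Hypothesis B_disj : forall i j, i != j -> [disjoint B i & B j].
Hypothesis B_cover : \bigcup_i B i = [set: 'I_n].
Hypothesis B_card : forall i, #|B i| = k.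
Hypothesis Ts_sub : forall i, Ts i \subset B i.
Hypothesis Ts_card : forall i, #|Ts i| = s.
Hypothesis s_gt0 : (0 < s)%N.
Hypothesis s_lt_k : (s < k)%N.

Definition Tset : {set 'I_n} := \bigcup_i Ts i.

Definition gens : {set {set 'I_n}} :=
  [set B i :|: [set t] | i : 'I_m, t : 'I_n in Tset].

Definition Fam : {set {set 'I_n}} := uc_gen gens.

Definition trace i : {set {set 'I_n}} := B i |: powerset (Ts i).

Definition Fam_spec : {set {set 'I_n}} :=
  [set A in blockwise B trace | [exists i, B i \subset A]].

Lemma Ts_neq0 i : exists t, t \in Ts i.
Proof. by apply/set0Pn; rewrite -card_gt0 Ts_card. Qed.

Lemma B_not_sub_Ts i : ~~ (B i \subset Ts i).
Proof.
by apply: contraTN s_lt_k => /subset_leq_card; rewrite B_card Ts_card leqNgt.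
Qed.

Lemma Tset_block t j : t \in Tset -> t \in B j -> t \in Ts j.
Proof.
case/bigcupP => i _ hti htj.
by rewrite -(block_unique B_disj (subsetP (Ts_sub i) t hti) htj).
Qed.

Lemma Ts_sub_Tset j : Ts j \subset Tset.
Proof. exact: bigcup_sup. Qed.

Lemma gens_mem i t : t \in Tset -> B i :|: [set t] \in gens.
Proof. by move=> ht; apply: imset2_f. Qed.

Lemma trace_sub i X : X \in trace i -> X \subset B i.
Proof.
by rewrite in_setU1 powersetE => /orP [/eqP -> // | /subset_trans]; apply.
Qed.

Lemma trace_setU i X Y : X \in trace i -> Y \in trace i -> X :|: Y \in trace i.
Proof.
move=> hX hY; have sX := trace_sub hX; have sY := trace_sub hY.
move: hX hY; rewrite !in_setU1 !powersetE.
case/orP => [/eqP -> | tX]; first by rewrite (setUidPl sY) eqxx.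
case/orP => [/eqP -> | tY]; first by rewrite (setUidPr sX) eqxx.
by rewrite subUset tX tY orbT.
Qed.

Lemma Fam_spec_union_closed : union_closed Fam_spec.
Proof.
apply/union_closedP => X Y; rewrite !inE => /andP [/forallP hX /existsP [i hi]].
case/andP => /forallP hY _; apply/andP; split.
  by apply/forallP => j; rewrite setIUl trace_setU.
by apply/existsP; exists i; rewrite subsetU ?hi.
Qed.

Lemma gens_sub_Fam_spec : gens \subset Fam_spec.
Proof.
apply/subsetP => _ /imset2P [i t _ hts ->]; rewrite !inE; apply/andP; split.
  apply/forallP => j; rewrite setIUl in_setU1 powersetE.
  have [<- | ij] := eqVneq i j; first by rewrite setIid (setUidPl (subsetIr _ _)) eqxx.
  rewrite (disjoint_setI0 (B_disj ij)) set0U; apply/orP; right.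
  by apply/subsetP => x; rewrite !inE => /andP [/eqP -> /(Tset_block hts)].
by apply/existsP; exists i; apply: subsetUl.
Qed.

(* Conversely, a member A of Fam_spec is covered by generators inside A:
   a point of a full block B j by B j ∪ {t} with t ∈ Ts j, and any other
   point x (necessarily in Tset) by B i0 ∪ {x}, where B i0 ⊆ A. *)
Lemma Fam_spec_sub_Fam : Fam_spec \subset Fam.
Proof.
apply/subsetP => A; rewrite !inE => /andP [/forallP hA /existsP [i0 sBA0]].
apply: mem_uc_gen.
  have [t ht] := Ts_neq0 i0.
  by apply/set0Pn; exists t; apply: (subsetP sBA0); apply: (subsetP (Ts_sub i0)).
move=> x hx; have [j hxj] := block_of B_cover x.
have := hA j; rewrite in_setU1 powersetE => /orP [/eqP/setIidPr sBA | sTs].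
  have [t ht] := Ts_neq0 j.
  exists (B j :|: [set t]); first exact/gens_mem/(subsetP (Ts_sub_Tset j)).
  by rewrite !inE hxj subUset sBA sub1set (subsetP sBA) // (subsetP (Ts_sub j)).
exists (B i0 :|: [set x]).
  by apply/gens_mem/(subsetP (Ts_sub_Tset j))/(subsetP sTs); rewrite inE hx hxj.
by rewrite !inE eqxx orbT subUset sBA0 sub1set.
Qed.

Lemma Fam_char : Fam = Fam_spec.
Proof.
apply/eqP; rewrite eqEsubset Fam_spec_sub_Fam andbT.
exact: uc_gen_min Fam_spec_union_closed gens_sub_Fam_spec.
Qed.

Lemma card_trace i : #|trace i| = (2 ^ s).+1.
Proof.
by rewrite cardsU1 card_powerset Ts_card powersetE (negbTE (B_not_sub_Ts i)).
Qed.

Lemma trace_sub_powerset i : trace i \subset powerset (B i).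
Proof. by apply/subsetP => X /trace_sub; rewrite powersetE. Qed.

(* Inside the admissible sets, containing a full block means not having all
   traces inside the sets Ts i; hence |Fam| = (2^s + 1)^m - (2^s)^m. *)
Lemma card_Fam : (#|Fam| + (2 ^ s) ^ m = (2 ^ s).+1 ^ m)%N.
Proof.
set small := fun i => powerset (Ts i).
have small_sub : blockwise B small \subset blockwise B trace.
  apply/subsetP => A; rewrite !inE => /forallP hA; apply/forallP => i.
  by rewrite in_setU1 hA orbT.
have -> : Fam = blockwise B trace :\: blockwise B small.
  apply/setP => A; rewrite Fam_char !inE.
  case hA: [forall i, A :&: B i \in trace i]; rewrite ?andbT ?andbF //=.
  rewrite negb_forall; apply: eq_existsb => i.
  move/forallP/(_ i): hA; rewrite in_setU1 powersetE => /orP [/eqP e | sub].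
    by rewrite e B_not_sub_Ts; apply/setIidPr.
  rewrite sub; apply: contraTF sub => /setIidPr ->; exact: B_not_sub_Ts.
have card_small : #|blockwise B small| = ((2 ^ s) ^ m)%N.
  rewrite card_blockwise // => [|i]; last by rewrite powersetS.
  rewrite (eq_bigr (fun=> 2 ^ s)%N) => [|i _]; last by rewrite card_powerset Ts_card.
  by rewrite prod_nat_const card_ord.
have card_adm : #|blockwise B trace| = ((2 ^ s).+1 ^ m)%N.
  rewrite card_blockwise // => [|i]; last exact: trace_sub_powerset.
  rewrite (eq_bigr (fun=> (2 ^ s).+1)) => [|i _]; last exact: card_trace.
  by rewrite prod_nat_const card_ord.
have := cardsID (blockwise B small) (blockwise B trace).
by rewrite (setIidPr small_sub) card_small card_adm addnC.
Qed.

(* A point outside Tset lies in A exactly when A contains its whole block. *)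
Lemma card_Fam_with x : x \notin Tset ->
  #|[set A in Fam | x \in A]| = ((2 ^ s).+1 ^ m.-1)%N.
Proof.
move=> xT; have [j xBj] := block_of B_cover x.
set O := fun i => if i == j then [set B j] else trace i.
have -> : [set A in Fam | x \in A] = blockwise B O.
  apply/setP => A; rewrite Fam_char !inE; apply/idP/forallP.
    case/andP => [/andP [/forallP hA _] xA] i; rewrite /O.
    case: eqVneq => [-> | _]; last exact: hA.
    rewrite inE; move: (hA j); rewrite in_setU1 powersetE => /orP [// | sub].
    case/negP: xT; apply/bigcupP; exists j => //.
    by apply: (subsetP sub); rewrite inE xA.
  move=> hA; have := hA j; rewrite /O eqxx inE => /eqP/setIidPr sBA.
  rewrite (subsetP sBA) // andbT; apply/andP; split; last by apply/existsP; exists j.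
  apply/forallP => i; move: (hA i); rewrite /O.
  by case: eqVneq => [-> _ | //]; rewrite in_setU1 (setIidPr sBA) eqxx.
rewrite card_blockwise // => [|i]; last first.
  rewrite /O; case: eqVneq => [-> | _]; last exact: trace_sub_powerset.
  by rewrite sub1set powersetE.
rewrite (bigD1 j) //= /O eqxx cards1 mul1n.
rewrite (eq_bigr (fun=> (2 ^ s).+1)) => [|i /negbTE ->]; last exact: card_trace.
by rewrite prod_nat_const cardC1 card_ord.
Qed.

Lemma abundance_out x : (m <= 2 ^ s)%N -> x \notin Tset ->
  1 / m%:R <= abundance Fam x <= 2 / m%:R.
Proof.
move=> m_le xT; have [j _] := block_of B_cover x.
have m_gt0 : (0 < m)%N := leq_ltn_trans (leq0n j) (ltn_ord j).
have lo := pow_succ_sub_le (2 ^ s) m.-1.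
have hi := @pow_succ_sub_ge (2 ^ s) m.-1 (leq_trans (leq_pred m) (leqW m_le)).
rewrite prednK // in lo hi.
have cardF := card_Fam.
have F_gt0 : (0 < #|Fam|)%N.
  have : ((2 ^ s) ^ m < (2 ^ s).+1 ^ m)%N by rewrite ltn_exp2r.
  lia.
rewrite /abundance card_Fam_with // -[1 / _]/(1%:R / m%:R : rat) !ler_ratio //.
rewrite mul1n (mulnC _ m); lia.
Qed.

Lemma setT_in_Fam : (0 < m)%N -> [set: 'I_n] \in Fam.
Proof.
by move=> m_gt0; rewrite Fam_char !inE; apply/andP; split;
  [apply/forallP => i; rewrite setTI setU11 | apply/existsP; exists (Ordinal m_gt0)].
Qed.

Lemma Fam_addT A x : A \in Fam -> x \in Tset -> x |: A \in Fam.
Proof.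
move=> AF xT; have : A \in Fam_spec by rewrite -Fam_char.
rewrite inE => /andP [_ /existsP [i sBA]].
have -> : x |: A = (B i :|: [set x]) :|: A by rewrite setUAC (setUidPr sBA) setUC.
have /union_closedP Fam_uc := uc_gen_union_closed gens.
by apply: Fam_uc AF; apply: (subsetP (sub_uc_gen gens)); apply: gens_mem.
Qed.

Lemma abundance_in x : x \in Tset -> 1 / 2 <= abundance Fam x <= 1.
Proof.
move=> xT; rewrite abundance_le1 andbT; apply: abundance_ge_half; last first.
  by move=> A AF; apply: Fam_addT.
have /bigcupP [i _ _] := xT.
apply/set0Pn; exists [set: 'I_n]; apply: setT_in_Fam.
exact: leq_ltn_trans (ltn_ord i).
Qed.

(* Every member of Fam contains a block, hence has at least k points. *)
Lemma Fam_large A : A \in Fam -> (k <= #|A|)%N.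
Proof.
by rewrite Fam_char inE => /andP [_ /existsP [i /subset_leq_card]]; rewrite B_card.
Qed.

Lemma card_Tset : (#|Tset| <= m * s)%N.
Proof.
apply: leq_trans (card_bigcup_le _) _.
by rewrite (eq_bigr (fun=> s)) // sum_nat_const card_ord.
Qed.

Lemma AOD_Fam : (2 <= m)%N -> (m <= 2 ^ s)%N ->
  1 / m%:R <= AOD Fam <= 2 / m%:R + (m * s)%:R / k%:R.
Proof.
move=> m_ge2 m_le; have m_gt0 : (0 < m)%N by lia.
have Fam0 : Fam :\ set0 != set0.
  have [t _] := Ts_neq0 (Ordinal m_gt0).
  apply/set0Pn; exists [set: 'I_n]; rewrite in_setD1 setT_in_Fam // andbT.
  by apply/set0Pn; exists t.
apply/andP; split.
  apply: AOD_ge => // x; have [xT | xT] := boolP (x \in Tset).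
    case/andP: (abundance_in xT) => + _; apply: le_trans.
    by rewrite !div1r lef_pV2 ?posrE ?ltr0n ?ler_nat.
  by case/andP: (abundance_out m_le xT).
apply: le_trans (AOD_le (S := Tset) (hi := 2 / m%:R) (k := k) Fam0 _ _ _ _) _.
- by apply: leq_trans s_lt_k.
- by rewrite divr_ge0 ?ler0n.
- by move=> x xT; case/andP: (abundance_out m_le xT).
- by move=> A AF _; apply: Fam_large.
rewrite lerD2l ler_ratio ?(leq_trans _ s_lt_k) //.
by rewrite leq_mul ?card_Tset.
Qed.

End Construction.

Unset Implicit Arguments. Set Strict Implicit.

Theorem mainTheorem3 (k m s : nat)
  (B : 'I_m -> {set 'I_(k * m)}) (Ts : 'I_m -> {set 'I_(k * m)}) :
  (0 < k)%N -> (0 < s)%N -> (2 <= m)%N -> (s + 2 <= k)%N ->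
  (m%:R / 2%:R ^+ s <= 1 / 4 :> rat) ->
  (* B_1, ..., B_m partition [n] into blocks of size k *)
  (forall i j, i != j -> [disjoint B i & B j]) ->
  (\bigcup_(i < m) B i = [set: 'I_(k * m)]) ->
  (forall i, #|B i| = k) ->
  (* T_i ⊆ B_i with |T_i| = s *)
  (forall i, Ts i \subset B i) ->
  (forall i, #|Ts i| = s) ->
  let T := \bigcup_(i < m) Ts i in
  let F := uc_gen [set B i :|: [set t] | i : 'I_m, t : 'I_(k * m) in T] in
  [/\ (forall x, x \notin T ->
         1 / m%:R <= abundance F x <= 2 / m%:R),
      (forall x, x \in T -> 1 / 2 <= abundance F x <= 1)
    & 1 / m%:R <= AOD F
        <= 2 / m%:R + (m ^ 2 * s)%:R / (k * m)%:R].
Proof.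
move=> k_gt0 s_gt0 m_ge2 s_le hm B_disj B_cover B_card Ts_sub Ts_card T F.
have -> : F = Fam B Ts by []; have -> : T = Tset Ts by [].
have s_lt_k : (s < k)%N by lia.
have m_le : (m <= 2 ^ s)%N.
  move: hm; rewrite -natrX -[1 / 4]/(1%:R / 4%:R : rat) ler_ratio ?expn_gt0 //; lia.
have /andP [AOD_lo AOD_hi] :=
  AOD_Fam B_disj B_cover B_card Ts_sub Ts_card s_gt0 s_lt_k m_ge2 m_le.
split=> [x | x |].
- exact: (abundance_out (x := x)
           B_disj B_cover B_card Ts_sub Ts_card s_gt0 s_lt_k m_le).
- exact: (abundance_in (x := x) B_disj B_cover Ts_sub Ts_card s_gt0).
- rewrite AOD_lo; apply: le_trans AOD_hi _.
  by rewrite lerD2l ler_ratio ?muln_gt0 ?k_gt0 //; nia.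
Qed.
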